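(* Let $S_n$ ($n\ge3$) act on $V=\mathbb{C}^n$ by permutations, fix $a,b,c\in\mathbb{C}$, let $*\in\{L,C\}$, and let $x,y$ be $3$-cycles with $xy=g$. Let $\phi^*_{x,y}$ be the corresponding summand of the $g$-component of $\phi(\kappa^*_{\mathrm{tri}},\kappa^L_{\mathrm{tri}})$. For $1\leq i,j,k\leq n$: (1) if $e_i,e_j\in V^y$, then $\phi^*_{x,y}(e_i,e_j,e_k)=0$; (2) if $e_i\in V^y\cap V^x$, then $\phi^*_{x,y}(e_i,e_j,e_k)=0$; (3) if $e_i\in V^y\setminus V^x$ and $e_j\notin V^y$, then $\phi^*_{x,y}(e_i,e_j,ye_j)=2(b-a)\big[\delta_y(xe_i)-\delta_y(x^{-1}e_i)\big]\kappa^*_x(e_i,xe_i)$; (4) if $e_i\notin V^y$, then $\phi^*_{x,y}(e_i,ye_i,y^2e_i)=0$.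
   Context: $S_n$ acts by $\sigma e_i=e_{\sigma(i)}$; $V^g$ is the fixed space of $g$; $\delta_y(v)=1$ if $v\in V^y$ and $0$ otherwise. $\kappa^L_{\mathrm{tri}}=\sum\kappa^L_{(ijk)}(ijk)$ is the linear 2-cochain supported on 3-cycles with $\kappa^L_{(ijk)}(e_i,e_j)=\kappa^L_{(ijk)}(e_j,e_k)=\kappa^L_{(ijk)}(e_k,e_i)=a(e_i+e_j+e_k)+b\sum_{l\notin\{i,j,k\}}e_l$ and $\kappa^L_{(ijk)}(e_l,e_m)=0$ whenever $e_l$ or $e_m$ lies in $V^{(ijk)}$; $\kappa^C_{\mathrm{tri}}$ is the constant 2-cochain supported on 3-cycles with $\kappa^C_{(ijk)}(e_i,e_j)=\kappa^C_{(ijk)}(e_j,e_k)=\kappa^C_{(ijk)}(e_k,e_i)=c$ and $\kappa^C_{(ijk)}(e_l,e_m)=0$ whenever $e_l$ or $e_m$ lies in $V^{(ijk)}$. For $\alpha$ linear or constant and $\beta$ linear, $\phi(\alpha,\beta)_g=\sum_{xy=g}\phi_{x,y}$ with $\phi_{x,y}(v_1,v_2,v_3)=\alpha_x(v_1+yv_1,\beta_y(v_2,v_3))+\alpha_x(v_2+yv_2,\beta_y(v_3,v_1))+\alpha_x(v_3+yv_3,\beta_y(v_1,v_2))$; here $\phi^*_{x,y}$ is this with $\alpha=\kappa^*_{\mathrm{tri}}$, $\beta=\kappa^L_{\mathrm{tri}}$. *)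

(* V = C^n is modelled as row vectors 'rV[C]_n, with
   C = R[i] the complex numbers over a real type R (mathcomp-real-closed). *)
From HB Require Import structures.
From mathcomp Require Import all_boot all_order all_algebra all_fingroup.
From mathcomp Require Import complex reals.

Set Implicit Arguments.
Unset Strict Implicit.
Unset Printing Implicit Defensive.

Import GRing.Theory Num.Theory.
Local Open Scope ring_scope.

Section Defs.
Variables (K : fieldType) (n : nat).

Definition evec (i : 'I_n) : 'rV[K]_n := delta_mx 0 i.

(* permutation action  sigma e_i = e_{sigma i} *)
Definition act (s : 'S_n) (v : 'rV[K]_n) : 'rV[K]_n :=
  \row_j v 0 ((s^-1)%g j).

Definition in_fixed (s : 'S_n) (v : 'rV[K]_n) : bool := act s v == v.

Definition deltaF (s : 'S_n) (v : 'rV[K]_n) : K :=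
  if in_fixed s v then 1 else 0.

Definition is_3cycle (s : 'S_n) : bool :=
  [exists i, exists j, exists k,
     [&& i != j, j != k, i != k, s i == j, s j == k, s k == i &
        [forall l, (l \notin [:: i; j; k]) ==> (s l == l)]]].

(* coefficient of the alternating form on the basis pair (e_p, e_q):
   1 if p, q are moved and q = g p  (pairs (e_i,e_j),(e_j,e_k),(e_k,e_i)),
  -1 if p, q are moved and p = g q  (the transposed pairs),
   0 otherwise (in particular if e_p or e_q lies in V^g). *)
Definition kcoef (g : 'S_n) (p q : 'I_n) : K :=
  if (g p != p) && (g q != q) then
    (if q == g p then 1 else if p == g q then -1 else 0)
  else 0.

(* a(e_i+e_j+e_k) + b * sum_{l not in {i,j,k}} e_l  for g = (i j k) *)
Definition valL (a b : K) (g : 'S_n) : 'rV[K]_n :=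
  \row_l (if g l != l then a else b).

Definition kappaL (a b : K) (g : 'S_n) (u v : 'rV[K]_n) : 'rV[K]_n :=
  if is_3cycle g then
    \sum_(p < n) \sum_(q < n) (u 0 p * v 0 q * kcoef g p q) *: valL a b g
  else 0.

Definition kappaC (c : K) (g : 'S_n) (u v : 'rV[K]_n) : K^o :=
  if is_3cycle g then
    \sum_(p < n) \sum_(q < n) u 0 p * v 0 q * kcoef g p q * c
  else 0.

Definition phi_xy (W : lmodType K)
    (alpha : 'S_n -> 'rV[K]_n -> 'rV[K]_n -> W)
    (beta : 'S_n -> 'rV[K]_n -> 'rV[K]_n -> 'rV[K]_n)
    (x y : 'S_n) (v1 v2 v3 : 'rV[K]_n) : W :=
  alpha x (v1 + act y v1) (beta y v2 v3)
  + alpha x (v2 + act y v2) (beta y v3 v1)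
  + alpha x (v3 + act y v3) (beta y v1 v2).

Definition lemma7p1_claims (W : lmodType K)
    (kstar : 'S_n -> 'rV[K]_n -> 'rV[K]_n -> W) (a b : K) (x y : 'S_n) : Prop :=
  let phi := phi_xy kstar (kappaL a b) x y in
  [/\ (forall i j k : 'I_n, in_fixed y (evec i) -> in_fixed y (evec j) ->
         phi (evec i) (evec j) (evec k) = 0),
      (forall i j k : 'I_n, in_fixed y (evec i) -> in_fixed x (evec i) ->
         phi (evec i) (evec j) (evec k) = 0),
      (forall i j : 'I_n, in_fixed y (evec i) -> ~~ in_fixed x (evec i) ->
         ~~ in_fixed y (evec j) ->
         phi (evec i) (evec j) (act y (evec j))
         = (2 * (b - a) * (deltaF y (act x (evec i))
                           - deltaF y (act (x^-1)%g (evec i))))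
             *: kstar x (evec i) (act x (evec i)))
    & (forall i : 'I_n, ~~ in_fixed y (evec i) ->
         phi (evec i) (act y (evec i)) (act (y ^+ 2)%g (evec i)) = 0)].

End Defs.

From Pilot Require Import Defs.
From HB Require Import structures.
From mathcomp Require Import all_boot all_order all_algebra all_fingroup.
From mathcomp Require Import complex reals ring.
Import GRing.Theory Num.Theory.
Local Open Scope ring_scope.
Set Implicit Arguments.
Unset Strict Implicit.
Unset Printing Implicit Defensive.

(* For a 3-cycle g, both kappa^L_g and kappa^C_g are a fixed value (valL a b g,
   resp. c) scaled by the alternating form
     kform g u v = \sum_p (u_p v_(g p) - u_(g p) v_p),
   so phi_{x,y}(v1, v2, v3) is that value for x scaled by
   \sum_cyc kform y v2 v3 * kform x (v1 + y v1) (valL a b y).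
   Claims (1)-(3) follow from kform g e_p v = v_(g p) - v_(g^-1 p), which
   vanishes for fixed p and gives kform g e_p e_(g p) = 1 for moved p.
   For (4) the first arguments add up to twice s = e_i + e_(yi) + e_(y^2 i),
   and valL a b y = b 1 + (a - b) s: kform x s kills constants and, being
   alternating, kills s. *)

Section ThreeCycle.
Variables (K : fieldType) (n : nat) (g : 'S_n).
Local Notation ev := (@evec K n).
Implicit Types (i p q : 'I_n) (u v : 'rV[K]_n).

Lemma is_3cycle_orbit p : is_3cycle g -> g p != p ->
  [/\ (g^-1)%g p = g (g p), g (g p) != p &
      forall q, (g q != q) = (q \in [:: p; g p; g (g p)])].
Proof.
case/existsP=> i /existsP[j /existsP[k /and4P[ij jk ik]]].
case/and4P=> /eqP gi /eqP gj /eqP gk /forallP fixed_rest.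
have moved q : (g q != q) = (q \in [:: i; j; k]).
  apply/idP/idP; first by apply: contraR => /(implyP (fixed_rest q)).
  by rewrite !inE => /or3P[] /eqP ->; rewrite ?gi ?gj ?gk // eq_sym.
have ginv r s : g s = r -> (g^-1)%g r = s by move=> <-; rewrite permK.
rewrite moved !inE => /or3P[] /eqP ->; [rewrite gi gj (ginv _ _ gk) |
  rewrite gj gk (ginv _ _ gi) | rewrite gk gi (ginv _ _ gj)].
all: split=> [||q]; rewrite ?moved ?inE ?(eq_sym k) //.
all: by case: (q == i); case: (q == j); case: (q == k).
Qed.

Lemma evecE i q : ev i 0 q = (q == i)%:R.
Proof. by rewrite mxE eqxx. Qed.

Lemma act_evec (s : 'S_n) i : Defs.act s (ev i) = ev (s i).
Proof.
apply/rowP => q; rewrite mxE !evecE.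
by rewrite -(inj_eq (@perm_inj _ s)) permKV.
Qed.

Lemma in_fixed_evec (s : 'S_n) i : in_fixed s (ev i) = (s i == i).
Proof.
rewrite /in_fixed act_evec; apply/eqP/eqP => [|-> //].
move/rowP/(_ (s i)); rewrite !evecE eqxx.
by case: eqP => // _ /eqP; rewrite oner_eq0.
Qed.

Lemma deltaF_evec (s : 'S_n) i : deltaF s (ev i) = (s i == i)%:R.
Proof. by rewrite /deltaF in_fixed_evec; case: (s i == i). Qed.

Lemma sum_mul_delta (f : 'I_n -> K) r : \sum_q f q * (q == r)%:R = f r.
Proof.
under eq_bigr do rewrite mulr_natr mulrb.
by rewrite -big_mkcond big_pred1_eq.
Qed.

Definition kform (u v : 'rV[K]_n) : K :=
  \sum_p \sum_q u 0 p * v 0 q * kcoef K g p q.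

Lemma kformDl u1 u2 v : kform (u1 + u2) v = kform u1 v + kform u2 v.
Proof.
rewrite /kform -big_split; apply: eq_bigr => p _; rewrite -big_split.
by apply: eq_bigr => q _; rewrite mxE !mulrDl.
Qed.

Lemma kformDr u v1 v2 : kform u (v1 + v2) = kform u v1 + kform u v2.
Proof.
rewrite /kform -big_split; apply: eq_bigr => p _; rewrite -big_split.
by apply: eq_bigr => q _; rewrite mxE mulrDr !mulrDl.
Qed.

Lemma kformZr u v s : kform u (s *: v) = s * kform u v.
Proof.
rewrite /kform mulr_sumr; apply: eq_bigr => p _; rewrite mulr_sumr.
by apply: eq_bigr => q _; rewrite mxE; ring.
Qed.

Hypothesis g3 : is_3cycle g.

Lemma kcoefE p q : kcoef K g p q = (q == g p)%:R - (q == (g^-1)%g p)%:R.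
Proof.
have [gp|mp] := eqVneq (g p) p.
  have ginvp : (g^-1)%g p = p by rewrite -{1}gp permK.
  by rewrite /kcoef gp ginvp eqxx subrr.
have [gq|mq] := eqVneq (g q) q.
  have q_gp : q != g p.
    by apply: contra_neq mp => q_eq; apply: (@perm_inj _ g); rewrite -q_eq.
  have q_ginvp : q != (g^-1)%g p.
    apply: contra_neq mp => q_eq.
    have qp : q = p by rewrite -{1}gq q_eq permKV.
    by rewrite -qp.
  by rewrite /kcoef gq eqxx andbF (negbTE q_gp) (negbTE q_ginvp) subrr.
have [ginv _ _] := is_3cycle_orbit g3 mp.
rewrite ginv /kcoef mp mq /=.
have -> : (p == g q) = (q == g (g p)).
  by rewrite -ginv; apply/eqP/eqP => [->|->]; rewrite ?permK ?permKV.
have [->|_] := eqVneq q (g p).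
  by rewrite eq_sym (inj_eq perm_inj) (negbTE mp) subr0.
by have [_|_] := eqVneq q (g (g p)); rewrite /= mulr0n ?subr0 ?sub0r.
Qed.

Lemma kform_sumE u v :
  kform u v = \sum_p u 0 p * (v 0 (g p) - v 0 ((g^-1)%g p)).
Proof.
apply: eq_bigr => p _.
transitivity (\sum_q (u 0 p * (v 0 q * (q == g p)%:R)
                      - u 0 p * (v 0 q * (q == (g^-1)%g p)%:R))).
  by apply: eq_bigr => q _; rewrite kcoefE; ring.
by rewrite sumrB -!mulr_sumr !sum_mul_delta mulrBr.
Qed.

Lemma kformE u v : kform u v = \sum_p (u 0 p * v 0 (g p) - u 0 (g p) * v 0 p).
Proof.
rewrite kform_sumE; under eq_bigr do rewrite mulrBr.
rewrite !sumrB; congr (_ - _); rewrite (reindex_inj (@perm_inj _ g)).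
by apply: eq_bigr => p _; rewrite permK.
Qed.

Lemma kformN u v : kform v u = - kform u v.
Proof. by rewrite !kformE -sumrN; apply: eq_bigr => p _; ring. Qed.

Lemma kform_alt u : kform u u = 0.
Proof. by rewrite kformE big1 // => p _; rewrite mulrC subrr. Qed.

Lemma kform_constr u c : kform u (const_mx c) = 0.
Proof. by rewrite kform_sumE big1 // => p _; rewrite !mxE subrr mulr0. Qed.

Lemma kform_evecl p v : kform (ev p) v = v 0 (g p) - v 0 ((g^-1)%g p).
Proof.
rewrite kform_sumE; under eq_bigr do rewrite evecE mulrC.
exact: sum_mul_delta.
Qed.

Lemma kform_fixl p v : g p = p -> kform (ev p) v = 0.
Proof. by move=> gp; rewrite kform_evecl -{2}gp permK gp subrr. Qed.

Lemma kform_fixr p u : g p = p -> kform u (ev p) = 0.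
Proof. by move=> gp; rewrite kformN kform_fixl ?oppr0. Qed.

Lemma kform_evec_succ p : g p != p -> kform (ev p) (ev (g p)) = 1.
Proof.
move=> mp; have [ginv _ _] := is_3cycle_orbit g3 mp.
by rewrite kform_evecl ginv !evecE eqxx (inj_eq perm_inj) (negbTE mp) subr0.
Qed.

Lemma valL_orbit a b p : g p != p ->
  valL a b g = const_mx b + (a - b) *: (ev p + ev (g p) + ev (g (g p))).
Proof.
move=> mp; have [_ g2p moved] := is_3cycle_orbit g3 mp.
have ne1 : (p == g p) = false by rewrite eq_sym (negbTE mp).
have ne2 : (p == g (g p)) = false by rewrite eq_sym (negbTE g2p).
have ne3 : (g p == g (g p)) = false.
  by rewrite eq_sym (inj_eq perm_inj) (negbTE mp).
apply/rowP => q; rewrite !mxE moved !inE /=.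
have [->|qp] := eqVneq q p; first by rewrite ne1 ne2 /=; ring.
have [->|qgp] := eqVneq q (g p); first by rewrite ne3 /=; ring.
by case: (q == g (g p)) => /=; ring.
Qed.

Lemma kappaL_kform a b u v : kappaL a b g u v = kform u v *: valL a b g.
Proof.
rewrite /kappaL g3 /kform scaler_suml; apply: eq_bigr => p _.
by rewrite scaler_suml.
Qed.

Lemma kappaC_kform c u v : kappaC c g u v = kform u v *: (c : K^o).
Proof.
rewrite /kappaC g3 /kform [RHS]/GRing.scale /= mulr_suml.
by apply: eq_bigr => p _; rewrite mulr_suml.
Qed.

End ThreeCycle.

Section Phi.
Variables (K : fieldType) (n : nat) (W : lmodType K).
Variables (kstar : 'S_n -> 'rV[K]_n -> 'rV[K]_n -> W) (F : W).
Variables (a b : K) (x y : 'S_n).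
Hypotheses (x3 : is_3cycle x) (y3 : is_3cycle y).
Hypothesis kstarE : forall u v, kstar x u v = kform x u v *: F.
Local Notation ev := (@evec K n).
Local Notation phi := (phi_xy kstar (kappaL a b) x y).
Local Notation V := (valL a b y).

Lemma phiE u v w : phi u v w =
  (kform y v w * kform x (u + Defs.act y u) V
   + kform y w u * kform x (v + Defs.act y v) V
   + kform y u v * kform x (w + Defs.act y w) V) *: F.
Proof. by rewrite /phi_xy !kappaL_kform // !kstarE !kformZr !scalerDl. Qed.

Lemma phi_fixed2 i j k : y i = i -> y j = j -> phi (ev i) (ev j) (ev k) = 0.
Proof.
move=> yi yj; rewrite phiE [kform y (ev j) _]kform_fixl //.
rewrite [kform y _ (ev i)]kform_fixr // [kform y (ev i) _]kform_fixl //.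
by rewrite !mul0r !addr0 scale0r.
Qed.

Lemma phi_fixed_xy i j k : y i = i -> x i = i -> phi (ev i) (ev j) (ev k) = 0.
Proof.
move=> yi xi; rewrite phiE act_evec yi kformDl [kform x _ _]kform_fixl //.
rewrite [kform y _ (ev i)]kform_fixr // [kform y (ev i) _]kform_fixl //.
by rewrite !(mul0r, mulr0, addr0) scale0r.
Qed.

Lemma phi_fixed_moved i j : y i = i -> x i != i -> y j != j ->
  phi (ev i) (ev j) (Defs.act y (ev j))
  = (2 * (b - a) * (deltaF y (Defs.act x (ev i))
                     - deltaF y (Defs.act (x^-1)%g (ev i))))
      *: kstar x (ev i) (Defs.act x (ev i)).
Proof.
move=> yi mi mj; rewrite phiE !act_evec yi kform_evec_succ //.
rewrite [kform y _ (ev i)]kform_fixr // [kform y (ev i) _]kform_fixl //.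
rewrite kstarE kform_evec_succ // scale1r !deltaF_evec.
rewrite kformDl kform_evecl // /valL !mxE.
congr (_ *: _); case: (y (x i) == x i); case: (y ((x^-1)%g i) == (x^-1)%g i).
all: by rewrite /=; ring.
Qed.

Lemma phi_orbit i : y i != i ->
  phi (ev i) (Defs.act y (ev i)) (Defs.act (y ^+ 2)%g (ev i)) = 0.
Proof.
move=> mi; have [yinv y2i _] := is_3cycle_orbit y3 mi.
have y3i : y (y (y i)) = i by rewrite -yinv permKV.
have myi : y (y i) != y i by rewrite (inj_eq perm_inj).
have myyi : y (y (y i)) != y (y i) by rewrite y3i eq_sym.
have orbit0 :
    kform x (ev i) V + kform x (ev (y i)) V + kform x (ev (y (y i))) V = 0.
  rewrite -!kformDl (valL_orbit y3 a b mi) kformDr kformZr.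
  by rewrite kform_constr // kform_alt // mulr0 addr0.
rewrite phiE !act_evec expgS expg1 permM y3i !kform_evec_succ //.
have := kform_evec_succ K y3 myyi; rewrite y3i => ->; rewrite !mul1r !kformDl.
move: orbit0; set k1 := kform x (ev i) V; set k2 := kform x (ev (y i)) V.
set k3 := kform x (ev (y (y i))) V => orbit0.
suff -> : k1 + k2 + (k2 + k3) + (k3 + k1) = 2 * (k1 + k2 + k3).
  by rewrite orbit0 mulr0 scale0r.
by ring.
Qed.

Lemma lemma7p1_claims_kform : lemma7p1_claims kstar a b x y.
Proof.
split=> [i j k | i j k | i j | i]; rewrite !in_fixed_evec.
- by move=> /eqP yi /eqP yj; apply: phi_fixed2.
- by move=> /eqP yi /eqP xi; apply: phi_fixed_xy.
- by move=> /eqP yi; apply: phi_fixed_moved.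
- exact: phi_orbit.
Qed.

End Phi.

Theorem lemma7p1 (R : realType) (n : nat) (a b c : R[i]) (x y : 'S_n) :
  (3 <= n)%N -> is_3cycle x -> is_3cycle y ->
  lemma7p1_claims (kappaL a b) a b x y /\ lemma7p1_claims (kappaC c) a b x y.
Proof.
move=> _ x3 y3; split.
  apply: (lemma7p1_claims_kform (F := valL a b x)) => // u v.
  exact: kappaL_kform.
apply: (lemma7p1_claims_kform (F := (c : (R[i])^o))) => // u v.
exact: kappaC_kform.
Qed.
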